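(* Let $(V,h)$ be a real quadratic space of odd dimension $d$ and let $\gamma^+,\gamma^-:\mathrm{Cl}(V,h)\to\mathrm{End}_\mathbb{C}(S)$ be the Pauli representations. Then $\gamma^+$ and $\gamma^-$ are weakly-faithful, and they are isomorphic in the category $\mathrm{\mathbb{C}lRep}_w$.
   Context: $(V,h)$: finite-dimensional real vector space with non-degenerate symmetric bilinear form of signature $(p,q)$, $d=p+q$; $\mathrm{Cl}(V,h)$ its real Clifford algebra and $\mathbb{C}\mathrm{l}(V,h)=\mathrm{Cl}(V,h)\otimes_\mathbb{R}\mathbb{C}$. For $d$ odd, fix an orientation of $V$ and let $\nu\in\mathrm{Cl}(V,h)$ be the corresponding Clifford volume element; it is central with $\nu^2=\sigma_{p,q}=(-1)^{(p-q-1)/2}$. Let $\nu_\mathbb{C}=\lambda\nu$ with $\lambda^2=\sigma_{p,q}$, so $\nu_\mathbb{C}$ is central in $\mathbb{C}\mathrm{l}(V,h)$ and $\nu_\mathbb{C}^2=1$. The Pauli representations are the two irreducible complex-algebra representations $\gamma^\pm_\mathbb{C}:\mathbb{C}\mathrm{l}(V,h)\to\mathrm{End}_\mathbb{C}(S)$ (with $\dim_\mathbb{C}S=2^{(d-1)/2}$) characterized by $\gamma^\pm_\mathbb{C}(\nu_\mathbb{C})=\pm\mathrm{id}_S$, restricted to $\mathrm{Cl}(V,h)$: $\gamma^\pm=\gamma^\pm_\mathbb{C}|_{\mathrm{Cl}(V,h)}$. A complex Clifford representation (unital real-algebra morphism $\mathrm{Cl}(V,h)\to\mathrm{End}_\mathbb{C}(S)$)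 is weakly-faithful if its restriction to $V$ is injective. $\mathrm{\mathbb{C}lRep}_w$ is the category whose objects are weakly-faithful complex Clifford representations (of arbitrary quadratic spaces) and whose morphisms $\gamma\to\gamma'$ are pairs $(\varphi_0,\varphi)$ of an isometry $\varphi_0:(V,h)\to(V',h')$ and a $\mathbb{C}$-linear map $\varphi:S\to S'$ with $\gamma'(\mathrm{Cl}(\varphi_0)(x))\circ\varphi=\varphi\circ\gamma(x)$ for all $x\in\mathrm{Cl}(V,h)$, where $\mathrm{Cl}(\varphi_0)$ is the algebra morphism extending $\varphi_0$. *)

From HB Require Import structures.
From mathcomp Require Import all_boot all_order all_algebra.
From mathcomp Require Import complex.
From mathcomp Require Import reals.

Set Implicit Arguments.
Unset Strict Implicit.
Unset Printing Implicit Defensive.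

Import Order.TTheory GRing.Theory Num.Theory.
Local Open Scope ring_scope.

Definition quad_form (R : realType) (V : vectType R) (h : V -> V -> R) : Prop :=
  [/\ forall (a : R) (u v w : V), h (a *: u + v) w = a * h u w + h v w,
      forall u v : V, h u v = h v u
    & forall u : V, (forall v : V, h u v = 0) -> u = 0].

Definition isometry (R : realType) (V V' : vectType R)
  (h : V -> V -> R) (h' : V' -> V' -> R) (f : 'Hom(V, V')) : Prop :=
  forall u v : V, h' (f u) (f v) = h u v.

Definition orthonormal_basis (R : realType) (V : vectType R) (h : V -> V -> R)
  (e : (\dim {: V}%VS).-tuple V) : Prop :=
  [/\ basis_of fullv e,
      forall i j : 'I_(\dim {: V}%VS), i != j -> h (tnth e i) (tnth e j) = 0
    & forall i : 'I_(\dim {: V}%VS),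
        h (tnth e i) (tnth e i) = 1 \/ h (tnth e i) (tnth e i) = -1].

Definition sig_p (R : realType) (V : vectType R) (h : V -> V -> R)
  (e : (\dim {: V}%VS).-tuple V) : nat :=
  #|[set i : 'I_(\dim {: V}%VS) | h (tnth e i) (tnth e i) == 1]|.

Definition sig_q (R : realType) (V : vectType R) (h : V -> V -> R)
  (e : (\dim {: V}%VS).-tuple V) : nat :=
  (\dim {: V}%VS - sig_p h e)%N.

Definition sigma_pq (R : realType) (p q : nat) : R :=
  (-1) ^ ((p%:Z - q%:Z - 1) %/ 2)%Z.

Definition ralg_morph (R : realType) (A B : algType R) (F : A -> B) : Prop :=
  [/\ forall x y : A, F (x + y) = F x + F y,
      forall (a : R) (x : A), F (a *: x) = a *: F x,
      forall x y : A, F (x * y) = F x * F y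
    & F 1 = 1].

Definition is_clifford_algebra (R : realType) (V : vectType R)
  (h : V -> V -> R) (A : algType R) (iota : V -> A) : Prop :=
  [/\ forall (a : R) (u v : V), iota (a *: u + v) = a *: iota u + iota v,
      forall v : V, iota v * iota v = (h v v)%:A
    & forall (B : algType R) (f : V -> B),
        (forall (a : R) (u v : V), f (a *: u + v) = a *: f u + f v) ->
        (forall v : V, f v * f v = (h v v)%:A) ->
        exists! F : A -> B, ralg_morph F /\ (forall v : V, F (iota v) = f v)].

Definition clifford_volume (R : realType) (V : vectType R) (A : algType R)
  (iota : V -> A) (e : (\dim {: V}%VS).-tuple V) : A :=
  \prod_(i < \dim {: V}%VS) iota (tnth e i).

Definition cl_rep (R : realType) (A : algType R) (S : vectType R[i])
  (gamma : A -> 'End(S)) : Prop :=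
  [/\ forall x y : A, gamma (x + y) = gamma x + gamma y,
      forall (a : R) (x : A), gamma (a *: x) = (a%:C)%C *: gamma x,
      forall x y : A, gamma (x * y) = (gamma x \o gamma y)%VF
    & gamma 1 = \1%VF].

Definition weakly_faithful (R : realType) (V : vectType R) (A : algType R)
  (iota : V -> A) (S : vectType R[i]) (gamma : A -> 'End(S)) : Prop :=
  forall u v : V, gamma (iota u) = gamma (iota v) -> u = v.

(* irreducibility of the complexified representation gamma_C of Cl_C(V,h):
   S is nonzero and the only C-subspaces invariant under gamma(Cl(V,h))
   (equivalently under gamma_C(Cl_C(V,h))) are 0 and S. *)
Definition irreducible_rep (R : realType) (A : algType R) (S : vectType R[i])
  (gamma : A -> 'End(S)) : Prop :=
  (0 < \dim {: S}%VS)%N /\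
  forall U : {vspace S},
    (forall x : A, (gamma x @: U <= U)%VS) -> U = 0%VS \/ U = fullv.

(* Pauli representation gamma^s (s = + or -, encoded by eps = 1 or -1):
   restriction to Cl(V,h) of an irreducible complex representation gamma_C
   of Cl_C(V,h) with gamma_C(nu_C) = eps id_S, where nu_C = lambda nu.
   Since gamma_C is the C-linear extension of gamma, gamma_C(nu_C) =
   lambda gamma(nu). *)
Definition pauli_rep (R : realType) (V : vectType R) (A : algType R)
  (iota : V -> A) (e : (\dim {: V}%VS).-tuple V) (lambda : R[i])
  (eps : R[i]) (S : vectType R[i]) (gamma : A -> 'End(S)) : Prop :=
  [/\ cl_rep gamma, irreducible_rep gamma
    & lambda *: gamma (clifford_volume iota e) = eps *: \1%VF].

(* morphism (phi0, phi) : gamma -> gamma' in ClRep_w, where Cl(phi0) is the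
   (unique, by the universal property) algebra morphism extending phi0 *)
Definition clrep_morph (R : realType) (V V' : vectType R)
  (h : V -> V -> R) (h' : V' -> V' -> R)
  (A A' : algType R) (iota : V -> A) (iota' : V' -> A')
  (S S' : vectType R[i]) (gamma : A -> 'End(S)) (gamma' : A' -> 'End(S'))
  (phi0 : 'Hom(V, V')) (phi : 'Hom(S, S')) : Prop :=
  isometry h h' phi0 /\
  forall F : A -> A', ralg_morph F -> (forall v : V, F (iota v) = iota' (phi0 v)) ->
    forall x : A, (gamma' (F x) \o phi = phi \o gamma x)%VF.

Definition clrep_iso (R : realType) (V : vectType R) (h : V -> V -> R)
  (A : algType R) (iota : V -> A)
  (S S' : vectType R[i]) (gamma : A -> 'End(S)) (gamma' : A -> 'End(S')) : Prop :=
  exists (phi0 psi0 : 'End(V)) (phi : 'Hom(S, S')) (psi : 'Hom(S', S)),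
    [/\ clrep_morph h h iota iota gamma gamma' phi0 phi,
        clrep_morph h h iota iota gamma' gamma psi0 psi,
        (psi0 \o phi0 = \1)%VF /\ (phi0 \o psi0 = \1)%VF
      & (psi \o phi = \1)%VF /\ (phi \o psi = \1)%VF].

From HB Require Import structures.
From mathcomp Require Import all_boot all_order all_algebra.
From mathcomp Require Import complex.
From mathcomp Require Import reals boolp ring.

(* Take [phi0 = -id]: its Clifford extension is the grade involution [alpha],
   so a morphism [(phi0, T) : gamma^+ -> gamma^-] is a [T] with
   [T gamma^+(e_i) = - gamma^-(e_i) T]. Let [a_i], [c_i] be the matrices of
   [- gamma^-(e_i)] and [gamma^+(e_i)]. Averaging over Clifford monomials,
   [X |-> sum_I h_I c_(rev I) X a_I], lands in such intertwiners, and its trace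
   as an operator on matrices is [sum_I h_I tr(c_(rev I)) tr(a_I)]. For [I]
   proper and nonempty, [a_I] anticommutes with some [a_j], hence is traceless;
   the volume conditions [lambda a_all = lambda c_all = 1] (for [a] because [d]
   is odd) make the terms [I = empty] and [I = all] equal [k^2]. So the trace
   is [2 k^2 <> 0], some average [T] is nonzero, and its kernel, being
   [gamma^+]-stable, vanishes by irreducibility. Weak faithfulness comes from
   [gamma(iota u iota w + iota w iota u) = 2 h(u, w)] and non-degeneracy. *)

Set Implicit Arguments.
Unset Strict Implicit.
Unset Printing Implicit Defensive.

Import GRing.Theory Num.Theory.
Local Open Scope ring_scope.

Section IotaSubalgebra.
Variables (R : comNzRingType) (V : Type) (A : algType R) (iota : V -> A).

Definition iota_closed (Q : A -> Prop) :=
  [/\ Q 1, forall x y, Q x -> Q y -> Q (x + y), forall (a : R) x, Q x -> Q (a *: x),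
      forall x y, Q x -> Q y -> Q (x * y) & forall v, Q (iota v)].

Definition iota_generated (x : A) : bool := `[< forall Q, iota_closed Q -> Q x >].

Lemma iota_generated_iota v : iota_generated (iota v).
Proof. by apply/asboolP => Q [] _ _ _ _; apply. Qed.

Lemma iota_generated_subalg_closed : subalg_closed iota_generated.
Proof.
split; first by apply/asboolP => Q [].
- move=> a x y /asboolP Qx /asboolP Qy; apply/asboolP => Q Qcl.
  by case: (Qcl) => _ QD QZ _ _; apply: QD; [apply: QZ; apply: Qx | apply: Qy].
- move=> x y /asboolP Qx /asboolP Qy; apply/asboolP => Q Qcl.
  by case: (Qcl) => _ _ _ QM _; apply: QM; [apply: Qx | apply: Qy].
Qed.

HB.instance Definition _ :=
  GRing.isSubalgClosed.Build R A iota_generated iota_generated_subalg_closed.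

Definition iota_subalg := {x : A | iota_generated x}.
HB.instance Definition _ := [isSub of iota_subalg for (@sval A iota_generated)].
HB.instance Definition _ := [Choice of iota_subalg by <:].
HB.instance Definition _ := [SubChoice_isSubAlgebra of iota_subalg by <:].

End IotaSubalgebra.

(* The universal property makes the inclusion of the subalgebra generated by
   [iota V] split: its composite with the induced map [Cl(V,h) -> iota_subalg]
   and the identity both extend [iota]. *)
Lemma clifford_ind (R : realType) (V : vectType R) (h : V -> V -> R)
    (A : algType R) (iota : V -> A) :
  is_clifford_algebra h iota -> forall Q, iota_closed iota Q -> forall x, Q x.
Proof.
case=> iota_lin iota_sq univ Q Qcl x.
pose j v : iota_subalg iota := Sub (iota v) (iota_generated_iota iota v).
have j_lin a u v : j (a *: u + v) = a *: j u + j v by apply: val_inj; rewrite /= iota_lin.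
have j_sq v : j v * j v = (h v v)%:A by apply: val_inj; rewrite /= iota_sq.
have [F [[[FD FZ FM F1] Fj] _]] := univ _ j j_lin j_sq.
have [G [_ G_uniq]] := univ _ iota iota_lin iota_sq.
have valF_id : (fun y => val (F y)) = id.
  rewrite -(G_uniq id) ?(G_uniq (fun y => val (F y))) //; split=> //.
  split=> [y z|a y|y z|]; by rewrite ?FD ?FZ ?FM ?F1 ?raddfD ?linearZ ?rmorphM ?rmorph1.
  by move=> v; rewrite Fj.
have -> : x = val (F x) by rewrite (congr1 (fun f => f x) valF_id).
by move: (valP (F x)) => /asboolP; apply.
Qed.

Fixpoint subseqs (T : Type) (s : seq T) : seq (seq T) :=
  if s is x :: s' then subseqs s' ++ map (cons x) (subseqs s') else [:: [::]].

Lemma subseqs_subseq (T : eqType) (s l : seq T) : l \in subseqs s -> subseq l s.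
Proof.
elim: s l => [|x s IHs] l /=; first by rewrite inE => /eqP ->.
rewrite mem_cat => /orP[/IHs l_s | /mapP[l' /IHs l'_s ->]].
  exact: subseq_trans l_s (subseq_cons s x).
by rewrite /= eqxx.
Qed.

Lemma count_nil_subseqs (T : eqType) (s : seq T) : count_mem [::] (subseqs s) = 1%N.
Proof.
elim: s => [|x s IHs] //=; rewrite count_cat IHs count_map.
by rewrite (eq_count (a2 := pred0)) ?count_pred0.
Qed.

Lemma count_self_subseqs (T : eqType) (s : seq T) : count_mem s (subseqs s) = 1%N.
Proof.
elim: s => [|x s IHs] //=; rewrite count_cat count_map.
have -> : count_mem (x :: s) (subseqs s) = 0%N.
  rewrite (@eq_in_count _ _ pred0) ?count_pred0 // => l /subseqs_subseq /size_subseq.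
  by apply: contraTF => /eqP ->; rewrite /= ltnn.
by rewrite add0n -[RHS]IHs; apply: eq_count => l /=; rewrite eqseq_cons eqxx.
Qed.

Definition mxprod (R : pzSemiRingType) (k : nat) (l : seq 'M[R]_k) : 'M[R]_k :=
  foldr mulmx 1%:M l.

Lemma mxprod_rcons (R : pzSemiRingType) k (l : seq 'M[R]_k) x :
  mxprod (rcons l x) = mxprod l *m x.
Proof. by elim: l => [|y l IHl] /=; rewrite ?mul1mx ?mulmx1 // IHl mulmxA. Qed.

Lemma mxprod_opp (R : comPzRingType) k (l : seq 'M[R]_k) :
  mxprod (map -%R l) = (-1) ^+ size l *: mxprod l.
Proof.
elim: l => [|x l IHl] /=; first by rewrite scale1r.
by rewrite IHl mulNmx -scalemxAr exprS mulN1r scaleNr.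
Qed.

Definition optrace (R : pzSemiRingType) k (L : 'M[R]_k -> 'M[R]_k) : R :=
  \sum_(p < k) \sum_(q < k) L (delta_mx p q) p q.

Section OpTrace.
Variables (R : comPzRingType) (k : nat).
Implicit Types (L : 'M[R]_k -> 'M[R]_k) (U W : 'M[R]_k).

Lemma eq_optrace L1 L2 : L1 =1 L2 -> optrace L1 = optrace L2.
Proof. by move=> eqL; apply: eq_bigr => p _; apply: eq_bigr => q _; rewrite eqL. Qed.

Lemma optraceD L1 L2 : optrace (fun X => L1 X + L2 X) = optrace L1 + optrace L2.
Proof.
rewrite /optrace -big_split; apply: eq_bigr => p _.
by rewrite -big_split; apply: eq_bigr => q _; rewrite mxE.
Qed.

Lemma optraceZ x L : optrace (fun X => x *: L X) = x * optrace L.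
Proof.
rewrite /optrace big_distrr; apply: eq_bigr => p _.
by rewrite big_distrr; apply: eq_bigr => q _; rewrite mxE.
Qed.

Lemma optrace0 : optrace (fun _ : 'M[R]_k => 0) = 0.
Proof. by rewrite /optrace big1 // => p _; rewrite big1 // => q _; rewrite mxE. Qed.

Lemma optrace_mulmx U W : optrace (fun X => U *m X *m W) = \tr U * \tr W.
Proof.
rewrite /optrace /mxtrace big_distrl; apply: eq_bigr => p _.
rewrite big_distrr; apply: eq_bigr => q _.
rewrite -(@mul_delta_mx _ k 1 k 0 p q) mulmxA -colE -mulmxA -rowE.
by rewrite !mxE big_ord1 !mxE.
Qed.

End OpTrace.

Definition clifford_mx_family (K : pzRingType) (k n : nat) (h : 'I_n -> K)
    (a : 'I_n -> 'M[K]_k) :=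
  (forall i, a i *m a i = (h i)%:M) /\
  (forall i j, i != j -> a i *m a j = - (a j *m a i)).

Lemma clifford_mx_familyN (K : pzRingType) k n (h : 'I_n -> K) (a : 'I_n -> 'M[K]_k) :
  clifford_mx_family h a -> clifford_mx_family h (fun i => - a i).
Proof.
case=> a_sq a_anti; split=> [i | i j /a_anti a_ij]; first by rewrite mulmxN mulNmx opprK.
by rewrite !mulmxN !mulNmx !opprK.
Qed.

Section CliffordAverage.
Variables (K : numFieldType) (k n : nat) (h : 'I_n -> K).
Hypothesis h_sq : forall i, h i * h i = 1.
Variables (a c : 'I_n -> 'M[K]_k).
Hypotheses (a_cl : clifford_mx_family h a) (c_cl : clifford_mx_family h c).

(* [avg s X] is the sum of [(\prod_(j <- l) h j) *: c_(rev l) X a_l] over the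
   subsequences [l] of [s], written as a product of factors [1 + h j c_j . a_j]. *)
Definition avg_step j X := X + h j *: (c j *m X *m a j).
Definition avg (s : seq 'I_n) X := foldl (fun X j => avg_step j X) X s.

Lemma avgD s X Y : avg s (X + Y) = avg s X + avg s Y.
Proof.
elim: s X Y => [|j s IHs] X Y //=; rewrite -IHs; congr avg.
by rewrite /avg_step mulmxDr mulmxDl scalerDr addrACA.
Qed.

Lemma avgZ s x X : avg s (x *: X) = x *: avg s X.
Proof.
elim: s X => [|j s IHs] X //=; rewrite -IHs; congr avg.
by rewrite /avg_step -scalemxAr -scalemxAl scalerDr !scalerA mulrC.
Qed.

Lemma avg_step_intertwines j X i : (i == j) || (X *m a i == c i *m X) ->
  avg_step j X *m a i = c i *m avg_step j X.
Proof.
have [[a_sq a_anti] [c_sq c_anti]] := (a_cl, c_cl).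
rewrite /avg_step mulmxDl mulmxDr -scalemxAl -scalemxAr.
have [-> _ | i_neq_j /= /eqP X_ai] := eqVneq i j.
  rewrite -mulmxA a_sq mul_mx_scalar !mulmxA c_sq mul_scalar_mx -scalemxAl.
  by rewrite !scalerA h_sq !scale1r addrC.
rewrite -[c j *m X *m a j *m a i]mulmxA a_anti 1?eq_sym // mulmxN mulmxA.
rewrite -[c j *m X *m a i]mulmxA X_ai mulmxA c_anti 1?eq_sym //.
by rewrite !mulNmx opprK !mulmxA.
Qed.

Lemma avg_intertwines s X : (forall i, i \notin s -> X *m a i = c i *m X) ->
  forall i, avg s X *m a i = c i *m avg s X.
Proof.
elim: s X => [|j s IHs] X X_intw /=; first by move=> i; apply: X_intw.
apply: IHs => i i_s; apply: avg_step_intertwines.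
have [// | i_neq_j /=] := eqVneq i j.
by apply/eqP/X_intw; rewrite inE negb_or i_neq_j.
Qed.

Lemma optrace_avg s U W :
  optrace (fun X => avg s (U *m X *m W)) =
  \sum_(l <- subseqs s) (\prod_(j <- l) h j) * \tr (mxprod (map c (rev l)) *m U)
                          * \tr (W *m mxprod (map a l)).
Proof.
elim: s U W => [|j s IHs] U W.
  by rewrite big_seq1 big_nil mul1r mul1mx mulmx1 optrace_mulmx.
rewrite (@eq_optrace _ _ _ (fun X => avg s (U *m X *m W)
                                   + h j *: avg s ((c j *m U) *m X *m (W *m a j)))); last first.
  by move=> X /=; rewrite /avg_step avgD avgZ !mulmxA.
rewrite optraceD optraceZ !IHs /= big_cat big_map big_distrr; congr (_ + _).
apply: eq_bigr => l _; rewrite big_cons rev_cons map_rcons mxprod_rcons /=.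
by rewrite !mulmxA !mulrA.
Qed.

Lemma mulmx_mxprod j l : a j *m mxprod (map a l) =
  (-1) ^+ count (predC1 j) l *: (mxprod (map a l) *m a j).
Proof.
have [_ a_anti] := a_cl.
elim: l => [|x l IHl] /=; first by rewrite scale1r mulmx1 mul1mx.
have [-> | x_neq_j] /= := eqVneq x j; first by rewrite [in LHS]IHl -scalemxAr !mulmxA.
rewrite mulmxA a_anti 1?eq_sym // mulNmx -[a x *m a j *m _]mulmxA [in LHS]IHl.
rewrite -scalemxAr !mulmxA.
by rewrite exprS mulN1r scaleNr.
Qed.

Lemma mxtrace_anticomm j P : a j *m P = - (P *m a j) -> \tr P = 0.
Proof.
have [a_sq _] := a_cl; move=> P_anti.
have tr_h : \tr (a j *m (P *m a j)) = h j * \tr P.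
  by rewrite mxtrace_mulC -mulmxA a_sq mul_mx_scalar mxtraceZ.
have : h j * \tr P *+ 2 = 0.
  rewrite mulr2n -{1}tr_h mulmxA P_anti mulNmx -mulmxA a_sq mul_mx_scalar.
  by rewrite raddfN /= mxtraceZ addNr.
move/eqP; rewrite mulrn_eq0 /= => /eqP/(congr1 (fun x => h j * x)).
by rewrite mulrA h_sq mul1r mulr0.
Qed.

Lemma mxprod_rev_mxprod l :
  (\prod_(j <- l) h j) *: (mxprod (map c (rev l)) *m mxprod (map c l)) = 1%:M.
Proof.
have [c_sq _] := c_cl.
elim: l => [|x l IHl]; first by rewrite big_nil scale1r /= mulmx1.
rewrite big_cons rev_cons map_rcons mxprod_rcons /= -mulmxA [c x *m (c x *m _)]mulmxA c_sq.
by rewrite mul_scalar_mx -scalemxAr scalerA mulrAC h_sq mul1r IHl.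
Qed.

Variable s : seq 'I_n.
Hypotheses (s_uniq : uniq s) (s_all : forall i, i \in s).

(* A proper nonempty [l] misses some [j]: if [l] is odd, [a_j] anticommutes
   with [a_l]; if it is even, its first element does. *)
Lemma mxtrace_mxprod_proper l : subseq l s -> l != [::] -> l != s ->
  \tr (mxprod (map a l)) = 0.
Proof.
move=> l_s l_nil l_neq_s; have l_uniq := subseq_uniq l_s s_uniq.
have count_notin j l' : j \notin l' -> count (predC1 j) l' = size l'.
  move=> j_l'; rewrite -[RHS]count_predT; apply: eq_in_count => x x_l' /=.
  by apply: contraNneq j_l' => <-.
have [odd_l | even_l] := boolP (odd (size l)).
  have [j j_l] : exists j, j \notin l.
    apply/existsP; apply: contraT; rewrite negb_exists => /forallP /= l_all.
    have s_le_l : (size s <= size l)%N.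
      by apply: uniq_leq_size s_uniq _ => x _; move: (l_all x); rewrite negbK.
    by move: l_neq_s; rewrite -(size_subseq_leqif l_s).2 eqn_leq s_le_l size_subseq.
  apply: (@mxtrace_anticomm j); rewrite mulmx_mxprod count_notin //.
  by rewrite -signr_odd odd_l expr1 scaleN1r.
case: l l_nil l_s l_neq_s l_uniq even_l => [//|x l] _ _ _ /andP[x_l _] even_l.
apply: (@mxtrace_anticomm x); rewrite mulmx_mxprod /= eqxx add0n count_notin //.
by move: even_l; rewrite /= -signr_odd => /negbNE ->; rewrite expr1 scaleN1r.
Qed.

Hypothesis s_nil : s != [::].
Variable la : K.
Hypotheses (a_vol : la *: mxprod (map a s) = 1%:M) (c_vol : la *: mxprod (map c s) = 1%:M).

Lemma optrace_avg_term l : l \in subseqs s ->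
  (\prod_(j <- l) h j) * \tr (mxprod (map c (rev l)) *m 1%:M)
    * \tr (1%:M *m mxprod (map a l)) = ((l == [::]) + (l == s))%:R * (k * k)%:R.
Proof.
move=> /subseqs_subseq l_s; rewrite mulmx1 mul1mx.
have [-> | l_nil] := eqVneq l [::].
  by rewrite /= big_nil mxtrace1 eq_sym (negbTE s_nil) !mul1r natrM.
have [-> | l_neq_s] := eqVneq l s; last first.
  by rewrite mxtrace_mxprod_proper // mulr0 mul0r.
have c_rev : (\prod_(j <- s) h j) *: mxprod (map c (rev s)) = la%:M.
  by rewrite -[LHS]mulmx1 -c_vol -scalemxAr -scalemxAl mxprod_rev_mxprod scalemx1.
rewrite -(mxtraceZ (\prod_(j <- s) h j)) c_rev mxtrace_scalar.
by rewrite -(mulr_natr la) mulrAC -mxtraceZ a_vol mxtrace1 mul1r natrM.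
Qed.

Lemma optrace_avg_full : optrace (avg s) = (k * k * 2)%:R.
Proof.
have sum_eq x : (\sum_(l <- subseqs s) (l == x) = count_mem x (subseqs s))%N.
  by rewrite -sum1_count [RHS]big_mkcond.
rewrite (@eq_optrace _ _ _ (fun X => avg s (1%:M *m X *m 1%:M))); last first.
  by move=> X; rewrite mul1mx mulmx1.
rewrite optrace_avg (eq_big_seq _ optrace_avg_term) -big_distrl -natr_sum.
by rewrite big_split !sum_eq count_nil_subseqs count_self_subseqs /= -natrM mulnC.
Qed.

Lemma exists_mx_intertwiner : (0 < k)%N ->
  exists2 X, X != 0 & forall i, X *m a i = c i *m X.
Proof.
move=> k_gt0; have [[X avgX_neq0] | avg_eq0] := pselect (exists X, avg s X != 0).
  by exists (avg s X) => //; apply: avg_intertwines => i; rewrite s_all.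
have : optrace (avg s) = 0.
  rewrite -(optrace0 K k); apply: eq_optrace => X /=.
  by apply/eqP/contraT => avgX_neq0; case: avg_eq0; exists X.
by rewrite optrace_avg_full => /eqP; rewrite pnatr_eq0 !muln_eq0 orbb orbF eqn0Ngt k_gt0.
Qed.

End CliffordAverage.

Section MatrixOfEndomorphism.
Variables (K : fieldType) (S : vectType K).

Local Notation mx f := (passmx.mxof (vbasis fullv) (vbasis fullv) f).

Lemma mx_comp (f g : 'End(S)) : mx (f \o g)%VF = mx g *m mx f.
Proof. by rewrite (@passmx.mxof_comp _ _ _ _ _ _ _ (vbasisP fullv)). Qed.

Lemma mxZ a (f : 'End(S)) : mx (a *: f) = a *: mx f.
Proof.
have mx0 : mx (0 : 'End(S)) = 0 by apply/eqP; rewrite passmx.mxof_eq0 ?vbasisP.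
have /= := passmx.mxof_linear (vbasis fullv) (vbasis fullv) a f 0.
by rewrite !addr0 mx0 addr0.
Qed.

Lemma mxN (f : 'End(S)) : mx (- f) = - mx f.
Proof. by rewrite -scaleN1r mxZ scaleN1r. Qed.

Lemma mx1 : mx (\1%VF : 'End(S)) = 1%:M.
Proof. by rewrite passmx.mxof1 // (basis_free (vbasisP fullv)). Qed.

Lemma mx_foldr_comp (l : seq 'End(S)) :
  mx (foldr (fun f g => f \o g) \1 l)%VF = mxprod (map (fun f => mx f) (rev l)).
Proof.
elim: l => [|f l IHl] /=; first exact: mx1.
by rewrite mx_comp IHl rev_cons map_rcons mxprod_rcons.
Qed.

End MatrixOfEndomorphism.

Section QuadraticSpace.
Variables (R : realType) (V : vectType R) (h : V -> V -> R).
Hypothesis hq : quad_form h.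

Lemma form0l w : h 0 w = 0.
Proof.
by case: hq => h_lin _ _; have := h_lin (-1) 0 0 w; rewrite scaler0 addr0 mulN1r addNr.
Qed.

Lemma formDl u v w : h (u + v) w = h u w + h v w.
Proof. by case: hq => h_lin _ _; have := h_lin 1 u v w; rewrite scale1r mul1r. Qed.

Lemma formNl u w : h (- u) w = - h u w.
Proof.
by case: hq => h_lin _ _; have := h_lin (-1) u 0 w; rewrite addr0 scaleN1r form0l addr0 mulN1r.
Qed.

Lemma formDr u v w : h w (u + v) = h w u + h w v.
Proof. by case: hq => _ h_sym _; rewrite h_sym formDl !(h_sym w). Qed.

Lemma formNN u v : h (- u) (- v) = h u v.
Proof. by case: hq => _ h_sym _; rewrite formNl h_sym formNl h_sym opprK. Qed.

End QuadraticSpace.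

Section CliffordAlgebra.
Variables (R : realType) (V : vectType R) (h : V -> V -> R) (A : algType R) (iota : V -> A).
Hypotheses (hq : quad_form h) (Hcl : is_clifford_algebra h iota).

Lemma clifford_iota0 : iota 0 = 0.
Proof.
by case: Hcl => iota_lin _ _; have := iota_lin (-1) 0 0; rewrite scaler0 addr0 scaleN1r addNr.
Qed.

Lemma clifford_iotaD u v : iota (u + v) = iota u + iota v.
Proof. by case: Hcl => iota_lin _ _; have := iota_lin 1 u v; rewrite !scale1r. Qed.

Lemma clifford_iotaN u : iota (- u) = - iota u.
Proof.
by case: Hcl => iota_lin _ _; have := iota_lin (-1) u 0; rewrite clifford_iota0 !addr0 !scaleN1r.
Qed.

Lemma clifford_iota_anticomm u v : iota u * iota v + iota v * iota u = (h u v *+ 2)%:A.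
Proof.
case: Hcl => _ iota_sq _; case: hq => _ h_sym _.
have := iota_sq (u + v); rewrite clifford_iotaD mulrDl !mulrDr !iota_sq.
rewrite formDl // !formDr // (h_sym v u) => sq_uv.
apply: (@addrI _ ((h u u)%:A + (h v v)%:A)).
rewrite addrACA [(h v v)%:A + _]addrC sq_uv -!scalerDl; congr (_ *: _).
by rewrite mulr2n; ring.
Qed.

Variable e : (\dim {: V}%VS).-tuple V.
Hypothesis he : orthonormal_basis h e.

Lemma clifford_basis_ind (Q : A -> Prop) : Q 1 ->
  (forall x y, Q x -> Q y -> Q (x + y)) -> (forall (a : R) x, Q x -> Q (a *: x)) ->
  (forall x y, Q x -> Q y -> Q (x * y)) -> (forall i, Q (iota (tnth e i))) ->
  forall x, Q x.
Proof.
move=> Q1 QD QZ QM Qe; apply: (clifford_ind Hcl); split=> // v.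
have [e_basis _ _] := he; case: Hcl => iota_lin _ _.
rewrite (coord_basis e_basis (memvf v)).
elim/big_rec: _ => [|i y _ Qy]; first by rewrite clifford_iota0 -(scale0r 1); apply: QZ.
by rewrite iota_lin; apply: QD => //; apply: QZ; rewrite -tnth_nth.
Qed.

Lemma exists_grade_involution :
  exists F : A -> A, ralg_morph F /\ forall v, F (iota v) = iota (- v).
Proof.
case: (Hcl) => iota_lin iota_sq univ.
have f_lin a u v : iota (- (a *: u + v)) = a *: iota (- u) + iota (- v).
  by rewrite opprD -scalerN iota_lin.
have f_sq v : iota (- v) * iota (- v) = (h v v)%:A by rewrite clifford_iotaN mulrNN iota_sq.
by have [F [F_spec _]] := univ _ _ f_lin f_sq; exists F.
Qed.

End CliffordAlgebra.

Section CliffordRepresentation.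
Variables (R : realType) (V : vectType R) (h : V -> V -> R) (A : algType R) (iota : V -> A).
Hypotheses (hq : quad_form h) (Hcl : is_clifford_algebra h iota).
Variable S : vectType R[i].
Implicit Types g : A -> 'End(S).

Lemma cl_repN g x : cl_rep g -> g (- x) = - g x.
Proof. by case=> _ gZ _ _; rewrite -scaleN1r gZ rmorphN1 scaleN1r. Qed.

Lemma cl_rep_scalar g (a : R) : cl_rep g -> g a%:A = a%:C%C *: \1%VF.
Proof. by case=> _ gZ _ g1; rewrite gZ g1. Qed.

Lemma cl_rep_weakly_faithful g : cl_rep g -> (0 < \dim {:S})%N -> weakly_faithful iota g.
Proof.
move=> g_rep dimS u v g_uv; have [gD _ gM _] := g_rep.
have g0 : g (iota (u - v)) = 0.
  by rewrite (clifford_iotaD Hcl) (clifford_iotaN Hcl) gD cl_repN // g_uv subrr.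
apply/eqP; rewrite -subr_eq0; apply/eqP; case: hq => _ _; apply=> w.
have := congr1 g (clifford_iota_anticomm hq Hcl (u - v) w).
rewrite gD !gM g0 comp_lfun0l comp_lfun0r addr0 cl_rep_scalar // => /esym/eqP.
rewrite scaler_eq0 (negbTE (lfun1_neq0 _)) -?dimvf // orbF => /eqP[] /eqP.
by rewrite mulrn_eq0 => /eqP.
Qed.

Variable e : (\dim {: V}%VS).-tuple V.
Hypothesis he : orthonormal_basis h e.

Local Notation gen i := (iota (tnth e i)).
Local Notation mx f := (passmx.mxof (vbasis fullv) (vbasis fullv) f).

Definition gen_sqC i : R[i] := (h (tnth e i) (tnth e i))%:C%C.

Lemma gen_sqC_sq i : gen_sqC i * gen_sqC i = 1.
Proof.
have [_ _ e_sq] := he; rewrite /gen_sqC -rmorphM.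
by case: (e_sq i) => ->; rewrite ?mulrNN mulr1 rmorph1.
Qed.

Lemma cl_rep_gen_sq g i : cl_rep g -> (g (gen i) \o g (gen i) = gen_sqC i *: \1)%VF.
Proof.
by move=> g_rep; have [_ _ <- _] := g_rep; case: Hcl => _ -> _; rewrite cl_rep_scalar.
Qed.

Lemma cl_rep_gen_anticomm g i j : cl_rep g -> i != j ->
  (g (gen i) \o g (gen j) = - (g (gen j) \o g (gen i)))%VF.
Proof.
move=> g_rep i_neq_j; have [gD _ gM _] := g_rep; have [_ e_orth _] := he.
have /eqP := clifford_iota_anticomm hq Hcl (tnth e i) (tnth e j).
rewrite e_orth // mul0rn scale0r addr_eq0 => /eqP gen_anti.
by rewrite -!gM gen_anti cl_repN.
Qed.

Lemma cl_rep_clifford_mx g : cl_rep g ->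
  clifford_mx_family gen_sqC (fun i => mx (g (gen i))).
Proof.
move=> g_rep; split=> [i | i j i_neq_j].
  by rewrite -mx_comp cl_rep_gen_sq // mxZ mx1 scalemx1.
by rewrite -!mx_comp cl_rep_gen_anticomm 1?eq_sym // mxN.
Qed.

Lemma cl_rep_volume g : cl_rep g -> mx (g (clifford_volume iota e)) =
  mxprod (map (fun i => mx (g (gen i))) (rev (index_enum 'I_(\dim {:V})))).
Proof.
case=> _ _ gM g1.
have g_prod l : g (\prod_(i <- l) gen i) =
    foldr (fun f r => f \o r)%VF \1%VF (map (fun i => g (gen i)) l).
  by elim: l => [|x l IHl]; rewrite ?big_nil ?big_cons ?gM ?IHl.
by rewrite /clifford_volume g_prod mx_foldr_comp -map_rev -map_comp.
Qed.

(* [T] intertwines [g1] with [g2 \o alpha], [alpha] the grade involution. *)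
Definition twisted_intertwiner g1 g2 (T : 'End(S)) :=
  forall i, (T \o g1 (gen i) = - g2 (gen i) \o T)%VF.

Lemma exists_twisted_intertwiner lambda gP gM : odd (\dim {:V}) ->
  pauli_rep iota e lambda 1 gP -> pauli_rep iota e lambda (-1) gM ->
  exists2 T, T != 0 & twisted_intertwiner gP gM T.
Proof.
move=> odd_d [P_rep [dimS _] P_vol] [M_rep _ M_vol].
pose s := rev (index_enum 'I_(\dim {:V})).
have s_uniq : uniq s by rewrite rev_uniq index_enum_uniq.
have s_all i : i \in s by rewrite mem_rev mem_index_enum.
have s_size : size s = \dim {:V} by rewrite size_rev -[RHS]card_ord cardT enumT.
have s_nil : s != [::] by rewrite -size_eq0 s_size -lt0n odd_gt0.
have P_vol_mx : lambda *: mxprod (map (fun i => mx (gP (gen i))) s) = 1%:M.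
  by rewrite -cl_rep_volume // -mxZ P_vol scale1r mx1.
have M_vol_mx : lambda *: mxprod (map (fun i => - mx (gM (gen i))) s) = 1%:M.
  rewrite (map_comp -%R) mxprod_opp size_map s_size -cl_rep_volume //.
  rewrite scalerA mulrC -scalerA -mxZ M_vol mxZ mx1 -signr_odd odd_d expr1.
  by rewrite !scaleN1r opprK.
have [X X_neq0 X_intw] := exists_mx_intertwiner gen_sqC_sq
  (clifford_mx_familyN (cl_rep_clifford_mx M_rep)) (cl_rep_clifford_mx P_rep)
  s_uniq s_all s_nil M_vol_mx P_vol_mx dimS.
exists (passmx.hommx (vbasis fullv) (vbasis fullv) X).
  by rewrite passmx.hommx_eq0 ?vbasisP.
move=> i; apply: (can_inj (passmx.mxofK (vbasisP fullv) (vbasisP fullv))).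
by rewrite !mx_comp passmx.hommxK ?vbasisP // mxN X_intw.
Qed.

Lemma twisted_intertwinerE g1 g2 T F : cl_rep g1 -> cl_rep g2 ->
  twisted_intertwiner g1 g2 T -> ralg_morph F -> (forall v, F (iota v) = iota (- v)) ->
  forall x, (T \o g1 x = g2 (F x) \o T)%VF.
Proof.
move=> g1_rep g2_rep T_intw [FD FZ FM F1] F_gen.
have [[D1 Z1 M1 O1] [D2 Z2 M2 O2]] := (g1_rep, g2_rep).
apply: (clifford_basis_ind Hcl he).
- by rewrite O1 F1 O2 comp_lfun1l comp_lfun1r.
- by move=> x y Tx Ty; rewrite D1 FD D2 comp_lfunDr comp_lfunDl Tx Ty.
- by move=> a x Tx; rewrite Z1 FZ Z2 -comp_lfunZr -comp_lfunZl Tx.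
- by move=> x y Tx Ty; rewrite M1 FM M2 comp_lfunA Tx -comp_lfunA Ty comp_lfunA.
- by move=> i; rewrite F_gen (clifford_iotaN Hcl) cl_repN.
Qed.

(* Schur: [lker T] is [g1]-stable. *)
Lemma twisted_intertwiner_lker0 g1 g2 T : cl_rep g1 -> cl_rep g2 ->
  irreducible_rep g1 -> T != 0 -> twisted_intertwiner g1 g2 T -> lker T == 0%VS.
Proof.
move=> g1_rep g2_rep [_ g1_irr] T_neq0 T_intw.
have [F [F_morph F_gen]] := exists_grade_involution Hcl.
have ker_stable x : (g1 x @: lker T <= lker T)%VS.
  apply/subvP => _ /memv_imgP[u u_ker ->]; rewrite memv_ker in u_ker.
  rewrite memv_ker -comp_lfunE (twisted_intertwinerE g1_rep g2_rep T_intw F_morph F_gen).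
  by rewrite comp_lfunE (eqP u_ker) linear0.
have [-> // | ker_full] := g1_irr _ ker_stable.
suff T0 : T = 0 by rewrite T0 eqxx in T_neq0.
by apply/lfunP => u; apply/eqP; rewrite zero_lfunE -memv_ker ker_full memvf.
Qed.

Lemma twisted_intertwiner_inv g1 g2 T : lker T == 0%VS ->
  twisted_intertwiner g1 g2 T -> twisted_intertwiner g2 g1 (T^-1)%VF.
Proof.
move=> kerT T_intw i.
have g2T : (g2 (gen i) \o T = - (T \o g1 (gen i)))%VF by rewrite T_intw comp_lfunNl opprK.
rewrite -[LHS](lker0_compfK kerT) -[((T^-1 \o _) \o T)%VF]comp_lfunA g2T.
by rewrite comp_lfunNr comp_lfunA (lker0_compVf kerT) comp_lfun1l comp_lfunNl.
Qed.

Lemma clrep_morph_twisted g1 g2 T : cl_rep g1 -> cl_rep g2 ->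
  twisted_intertwiner g1 g2 T -> clrep_morph h h iota iota g1 g2 (- \1)%VF T.
Proof.
move=> g1_rep g2_rep T_intw; split=> [u v | F F_morph F_gen x].
  by rewrite !opp_lfunE !id_lfunE formNN.
rewrite -(twisted_intertwinerE g1_rep g2_rep T_intw F_morph) // => v.
by rewrite F_gen opp_lfunE id_lfunE.
Qed.

End CliffordRepresentation.

Theorem proposition4p3 (R : realType) (V : vectType R) (h : V -> V -> R)
  (A : algType R) (iota : V -> A)
  (e : (\dim {: V}%VS).-tuple V) (lambda : R[i])
  (S : vectType R[i]) (gammaP gammaM : A -> 'End(S)) :
  quad_form h ->
  odd (\dim {: V}%VS) ->
  is_clifford_algebra h iota ->
  orthonormal_basis h e ->
  lambda ^+ 2 = ((sigma_pq R (sig_p h e) (sig_q h e))%:C)%C ->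
  pauli_rep iota e lambda 1 gammaP ->
  pauli_rep iota e lambda (-1) gammaM ->
  [/\ weakly_faithful iota gammaP, weakly_faithful iota gammaM
    & clrep_iso h iota gammaP gammaM].
Proof.
move=> hq odd_d Hcl he _ P_pauli M_pauli.
have [[P_rep [dimS P_irr] _] [M_rep _ _]] := (P_pauli, M_pauli).
have [T T_neq0 T_intw] := exists_twisted_intertwiner hq Hcl he odd_d P_pauli M_pauli.
have kerT := twisted_intertwiner_lker0 Hcl he P_rep M_rep (conj dimS P_irr) T_neq0 T_intw.
split; [exact: (cl_rep_weakly_faithful hq Hcl P_rep dimS) |
        exact: (cl_rep_weakly_faithful hq Hcl M_rep dimS) |].
have negK : ((- \1) \o (- \1) = \1 :> 'End(V))%VF.
  by rewrite comp_lfunNl comp_lfunNr opprK comp_lfun1l.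
exists (- \1)%VF, (- \1)%VF, T, T^-1%VF; split=> //.
- exact: (clrep_morph_twisted hq Hcl he P_rep M_rep T_intw).
- exact: (clrep_morph_twisted hq Hcl he M_rep P_rep (twisted_intertwiner_inv kerT T_intw)).
- by split; [apply: lker0_compVf | apply: lker0_compfV].
Qed.
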